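(* Let $\mu$ be a probability measure on a set $\mathcal{X}$ and let $k:\mathcal{X}\times\mathcal{X}\to\mathbb{R}$ be a positive-definite kernel with real RKHS $\mathcal{H}$, satisfying $\sup_{x\in\mathcal{X}}\sqrt{k(x,x)}\le\kappa$ for some $\kappa>0$, and admitting a Mercer expansion $k(x,y)=\sum_{j=1}^\infty \sigma_j e_j(x)e_j(y)$ for all $x,y\in\mathcal{X}$, where $(e_j)_{j\ge1}$ is an orthonormal set in $L^2(\mu)$ and $\sigma_1\ge\sigma_2\ge\cdots\ge0$. Fix an integer $d\ge1$ and define $\bm\Phi_d(x):=(\sqrt{\sigma_1}e_1(x),\dots,\sqrt{\sigma_d}e_d(x))^\top\in\mathbb{R}^d$, $g_d(x):=\sqrt{\sum_{j>d}\sigma_j e_j(x)^2}$, and $\bm\Psi_d(x):=(\bm\Phi_d(x)^\top,g_d(x))^\top\in\mathbb{R}^{d+1}$. Let $x_1,\dots,x_N\in\mathcal{X}$, let $\bm w=(w_i)_{i=1}^N\in\Delta_N$, and define $Q_N(f):=\sum_{i=1}^N w_i f(x_i)$. If \[ \Bigl|\mathbb{E}_{x\sim\mu}[\bm\Psi_d(x)]-\sum_{i=1}^N w_i\bm\Psi_d(x_i)\Bigr|\le\varepsilon \] for some $\varepsilon\ge0$, then \[ \operatorname{wce}(Q_N;\mathcal{H},\mu)\le 2\int g_d(x)\,\mathrm{d}\mu(x)+\varepsilon\le 2\sqrt{\sum_{j>d}\sigma_j}+\varepsilon . \]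
   Context: $\Delta_N:=\{\bm w\in\mathbb{R}^N_{\ge0}:\sum_{i=1}^N w_i=1\}$ is the probability simplex and $|\cdot|$ is the Euclidean norm. For a quadrature rule $Q_N(f)=\sum_i w_i f(x_i)$, the worst-case error is $\operatorname{wce}(Q_N;\mathcal{H},\mu):=\sup_{\|f\|_{\mathcal{H}}\le1}\bigl|\int f\,\mathrm{d}\mu-Q_N(f)\bigr|$, which equals $\bigl\|m_\mu-\sum_{i}w_ik(x_i,\cdot)\bigr\|_{\mathcal{H}}$ where $m_\mu:=\int k(x,\cdot)\,\mathrm{d}\mu(x)\in\mathcal{H}$ is the kernel mean embedding. *)

From HB Require Import structures.
From mathcomp Require Import all_boot all_order all_algebra.
From mathcomp Require Import all_classical all_reals all_analysis.
Set Implicit Arguments. Unset Strict Implicit. Unset Printing Implicit Defensive.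
Import Order.TTheory GRing.Theory Num.Theory.
Import numFieldNormedType.Exports.
Local Open Scope classical_set_scope.
Local Open Scope ring_scope.

Definition is_RKHS (R : realType) (X : Type) (k : X -> X -> R)
  (H : set (X -> R)) (ip : (X -> R) -> (X -> R) -> R) : Prop :=
  H (fun _ => 0) /\
      (forall f g, H f -> H g -> H (f \+ g)) /\
      (forall (a : R) f, H f -> H (fun x => a * f x)) /\
      (forall f g, H f -> H g -> ip f g = ip g f) /\
      (forall f g h, H f -> H g -> H h -> ip (f \+ g) h = ip f h + ip g h) /\
      (forall (a : R) f g, H f -> H g -> ip (fun x => a * f x) g = a * ip f g) /\
      (forall f, H f -> 0 <= ip f f) /\
      (forall f, H f -> ip f f = 0 -> f = (fun _ => 0)) /\
      (forall x, H (k x)) /\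
      (forall f x, H f -> f x = ip f (k x)) /\
      (forall u : nat -> X -> R, (forall n, H (u n)) ->
        (forall e : R, 0 < e -> exists N : nat, forall m n, (N <= m)%N -> (N <= n)%N ->
            ip (u m \- u n) (u m \- u n) < e) ->
        exists f, H f /\
          (forall e : R, 0 < e -> exists N : nat, forall n, (N <= n)%N ->
            ip (u n \- f) (u n \- f) < e)).

Definition pd_kernel (R : realType) (X : Type) (k : X -> X -> R) : Prop :=
  (forall x y, k x y = k y x) /\
  (forall (n : nat) (c : 'I_n -> R) (z : 'I_n -> X),
     0 <= \sum_(i < n) \sum_(j < n) c i * c j * k (z i) (z j)).

Definition wce (R : realType) (dX : measure_display) (X : measurableType dX)
  (mu : probability X R) (H : set (X -> R)) (ip : (X -> R) -> (X -> R) -> R)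
  (N : nat) (w : 'I_N -> R) (xs : 'I_N -> X) : \bar R :=
  ereal_sup [set `| (\int[mu]_x (f x)%:E - (\sum_(i < N) w i * f (xs i))%:E)%E |%E
            | f in [set f | H f /\ ip f f <= 1]].

(* g_d(x) = sqrt (sum_{j >= d} sigma_j e_j(x)^2)   (indices start at 0) *)
Definition gtail (R : realType) (X : Type) (sigma : nat -> R) (e : nat -> X -> R)
  (d : nat) (x : X) : R :=
  Num.sqrt (fine (\sum_(d <= j <oo) (sigma j * e j x ^+ 2)%:E)%E).

Definition Psi (R : realType) (X : Type) (sigma : nat -> R) (e : nat -> X -> R)
  (d : nat) (x : X) (j : 'I_d.+1) : R :=
  if (j < d)%N then Num.sqrt (sigma j) * e j x else gtail sigma e d x.

Definition eucl_norm (R : realType) (n : nat) (v : 'I_n -> R) : R :=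
  Num.sqrt (\sum_(i < n) v i ^+ 2).

Arguments Psi {R X} sigma e d x j.
Arguments eucl_norm {R} n v.

(* Write Q f := \int f dmu - \sum_i w_i f(x_i).  For a kernel combination
   s = \sum_p c_p k(z_p, .), Mercer's expansion gives
   Q s = \sum_j sigma_j b_j Q(e_j) with b_j = \sum_p c_p e_j(z_p) and
   \sum_j sigma_j b_j^2 <= <s, s>.  Split the sum at d.  The head is controlled
   by Cauchy-Schwarz against the first d coordinates of the Psi_d-error.  For
   the tail, phi := \sum_(d <= j < n) sigma_j Q(e_j) e_j satisfies
   |phi| <= (\sum_(d <= j < n) sigma_j Q(e_j)^2)^(1/2) g_d pointwise while
   Q phi = \sum_(d <= j < n) sigma_j Q(e_j)^2, so this square root is at most
   \int g_d + \sum_i w_i g_d(x_i) = 2 \int g_d - Q g_d.  Together with the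
   Psi_d-error bound this yields |Q s| <= sqrt <s, s> (2 \int g_d + eps).
   A general f in the unit ball is reached through near-minimisers s of
   <f - s, f - s> over kernel combinations: their residual is almost orthogonal
   to every kernel combination, so s is uniformly close to f and
   sqrt <s, s> <= sqrt <f, f> + o(1).
   The last inequality is Jensen: (\int g_d)^2 <= \int g_d^2 = \sum_(j >= d) sigma_j. *)

From HB Require Import structures.
From mathcomp Require Import all_boot all_order all_algebra.
From mathcomp Require Import all_classical all_reals all_analysis.
From mathcomp Require Import measurable_realfun.
From mathcomp Require Import ring lra.
Set Implicit Arguments. Unset Strict Implicit. Unset Printing Implicit Defensive.
Import Order.TTheory GRing.Theory Num.Theory.
Import numFieldNormedType.Exports.
Local Open Scope classical_set_scope.
Local Open Scope ring_scope.

Section cauchy_schwarz.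
Variable R : rcfType.

Lemma sqr_le_of_quadratic_ge0 (a b c : R) : 0 <= b ->
  (forall t, 0 <= c - 2 * t * a + t ^+ 2 * b) -> a ^+ 2 <= b * c.
Proof.
move=> b_ge0 quad_ge0.
have [b_gt0|] := ltrP 0 b.
  have := quad_ge0 (a / b).
  have -> : c - 2 * (a / b) * a + (a / b) ^+ 2 * b = c - a ^+ 2 / b.
    by field; rewrite gt_eqF.
  by rewrite subr_ge0 ler_pdivrMr // mulrC.
move=> b_le0; have b0 : b = 0 by apply/eqP; rewrite eq_le b_le0 b_ge0.
rewrite b0 in quad_ge0 *.
have [->|a_neq0] := eqVneq a 0; first by rewrite expr0n mul0r.
have := quad_ge0 ((c + 1) / (2 * a)).
have -> : c - 2 * ((c + 1) / (2 * a)) * a + ((c + 1) / (2 * a)) ^+ 2 * 0 = -1.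
  by field.
by rewrite ler0N1.
Qed.

Lemma sqr_sum_mul_le (I : Type) (r : seq I) (a b : I -> R) :
  (\sum_(i <- r) a i * b i) ^+ 2 <= (\sum_(i <- r) a i ^+ 2) * (\sum_(i <- r) b i ^+ 2).
Proof.
apply: sqr_le_of_quadratic_ge0 => [|t]; first by rewrite sumr_ge0 // => i _; exact: sqr_ge0.
have -> : \sum_(i <- r) b i ^+ 2 - 2 * t * \sum_(i <- r) a i * b i +
    t ^+ 2 * \sum_(i <- r) a i ^+ 2 = \sum_(i <- r) (b i - t * a i) ^+ 2.
  rewrite !mulr_sumr -sumrN -!big_split /=.
  by apply: eq_bigr => i _; ring.
by rewrite sumr_ge0 // => i _; exact: sqr_ge0.
Qed.

Lemma weighted_cauchy_schwarz (I : Type) (r : seq I) (s a b : I -> R) :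
  (forall i, 0 <= s i) ->
  `|\sum_(i <- r) s i * a i * b i| <=
  Num.sqrt (\sum_(i <- r) s i * a i ^+ 2) * Num.sqrt (\sum_(i <- r) s i * b i ^+ 2).
Proof.
move=> s_ge0; have sqrtK i : Num.sqrt (s i) ^+ 2 = s i := sqr_sqrtr (s_ge0 i).
have -> : \sum_(i <- r) s i * a i * b i =
    \sum_(i <- r) (Num.sqrt (s i) * a i) * (Num.sqrt (s i) * b i).
  by apply: eq_bigr => i _; rewrite mulrACA -expr2 sqrtK mulrA.
have sum_sqrE c : \sum_(i <- r) s i * c i ^+ 2 = \sum_(i <- r) (Num.sqrt (s i) * c i) ^+ 2.
  by apply: eq_bigr => i _; rewrite exprMn sqrtK.
have sum_sqr_ge0 c : 0 <= \sum_(i <- r) (Num.sqrt (s i) * c i) ^+ 2.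
  by rewrite sumr_ge0 // => i _; exact: sqr_ge0.
rewrite !sum_sqrE -sqrtrM // -sqrtr_sqr ler_sqrt ?mulr_ge0 //.
exact: sqr_sum_mul_le.
Qed.

Lemma ler_norm_of_sqr (a b : R) : 0 <= b -> a ^+ 2 <= b ^+ 2 -> `|a| <= b.
Proof.
by move=> b_ge0 ab; rewrite -sqrtr_sqr -(ger0_norm b_ge0) -sqrtr_sqr ler_sqrt // sqr_ge0.
Qed.

Lemma dot2_le_sqrt_mul (a1 a2 b1 b2 C : R) :
  0 <= C -> b1 ^+ 2 + b2 ^+ 2 <= C ^+ 2 ->
  a1 * b1 + a2 * b2 <= Num.sqrt (a1 ^+ 2 + a2 ^+ 2) * C.
Proof.
move=> C_ge0 b_le_C; have a_ge0 : 0 <= a1 ^+ 2 + a2 ^+ 2 by rewrite addr_ge0 ?sqr_ge0.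
apply: le_trans (ler_norm _) (ler_norm_of_sqr _ _); first by rewrite mulr_ge0 ?sqrtr_ge0.
rewrite exprMn sqr_sqrtr //.
have := sqr_ge0 (a1 * b2 - a2 * b1); have := ler_wpM2l a_ge0 b_le_C; nra.
Qed.

End cauchy_schwarz.

Section rkhs.
Variables (R : realType) (X : Type) (k : X -> X -> R) (H : set (X -> R))
  (ip : (X -> R) -> (X -> R) -> R).
Hypothesis rkhs : is_RKHS k H ip.

Definition lincomb (f : X -> R) (a : R) (g : X -> R) : X -> R := fun x => f x + a * g x.

Lemma rkhs0 : H (fun _ => 0).
Proof. by case: rkhs. Qed.

Lemma rkhs_lincomb f a g : H f -> H g -> H (lincomb f a g).
Proof. by case: rkhs => _ [memD [memZ _]] Hf Hg; exact: memD (memZ _ _ Hg). Qed.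

Lemma rkhs_kernel x : H (k x).
Proof. by case: rkhs => _ [_ [_ [_ [_ [_ [_ [_ [memk _]]]]]]]]; exact: memk. Qed.

Lemma ipC f g : H f -> H g -> ip f g = ip g f.
Proof. by case: rkhs => _ [_ [_ [ipC _]]]; exact: ipC. Qed.

Lemma ip_lincombl f a g h : H f -> H g -> H h ->
  ip (lincomb f a g) h = ip f h + a * ip g h.
Proof.
case: rkhs => _ [_ [memZ [_ [ipDl [ipZl _]]]]] Hf Hg Hh.
by rewrite /lincomb ipDl ?ipZl //; exact: memZ.
Qed.

Lemma ip_lincombr f a g h : H f -> H g -> H h ->
  ip h (lincomb f a g) = ip h f + a * ip h g.
Proof.
by move=> Hf Hg Hh; rewrite ipC ?ip_lincombl ?(ipC Hh) //; exact: rkhs_lincomb.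
Qed.

Lemma ip_ge0 f : H f -> 0 <= ip f f.
Proof. by case: rkhs => _ [_ [_ [_ [_ [_ [ip_ge0 _]]]]]]; exact: ip_ge0. Qed.

Lemma ip_lincomb_self f a g : H f -> H g ->
  ip (lincomb f a g) (lincomb f a g) = ip f f + 2 * a * ip f g + a ^+ 2 * ip g g.
Proof.
move=> Hf Hg; have Hfg := rkhs_lincomb a Hf Hg.
rewrite ip_lincombl // !ip_lincombr // (ipC Hg Hf); ring.
Qed.

Lemma ip_cauchy_schwarz f g : H f -> H g -> ip f g ^+ 2 <= ip g g * ip f f.
Proof.
move=> Hf Hg; apply: sqr_le_of_quadratic_ge0 => [|t]; first exact: ip_ge0.
have := ip_ge0 (rkhs_lincomb (- t) Hf Hg); rewrite ip_lincomb_self //.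
by rewrite sqrrN mulrN mulNr.
Qed.

Lemma reproducing f x : H f -> f x = ip f (k x).
Proof. by case: rkhs => _ [_ [_ [_ [_ [_ [_ [_ [_ [repr _]]]]]]]]]; exact: repr. Qed.

Lemma kernel_diagE x : k x x = ip (k x) (k x).
Proof. exact/reproducing/rkhs_kernel. Qed.

Lemma kernel_diag_ge0 x : 0 <= k x x.
Proof. by rewrite kernel_diagE; exact/ip_ge0/rkhs_kernel. Qed.

Lemma sqr_eval_le f x : H f -> f x ^+ 2 <= ip f f * k x x.
Proof.
by move=> Hf; rewrite reproducing // kernel_diagE mulrC; apply: ip_cauchy_schwarz => //;
  exact: rkhs_kernel.
Qed.

Definition kcomb (l : seq (R * X)) : X -> R := fun y => \sum_(p <- l) p.1 * k p.2 y.

Lemma kcomb_cons p l : kcomb (p :: l) = lincomb (kcomb l) p.1 (k p.2).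
Proof. by apply: funext => y; rewrite /kcomb /lincomb big_cons addrC. Qed.

Lemma rkhs_kcomb l : H (kcomb l).
Proof.
elim: l => [|p l IHl]; last by rewrite kcomb_cons; exact: rkhs_lincomb IHl (rkhs_kernel _).
have -> : kcomb [::] = (fun _ => 0) by apply: funext => y; rewrite /kcomb big_nil.
exact: rkhs0.
Qed.

Lemma lincomb_kcomb l a l' :
  lincomb (kcomb l) a (kcomb l') = kcomb (l ++ map (fun p => (a * p.1, p.2)) l').
Proof.
apply: funext => y; rewrite /lincomb /kcomb big_cat big_map /= mulr_sumr.
by congr (_ + _); apply: eq_bigr => p _; rewrite mulrA.
Qed.

Lemma kcomb1 x : kcomb [:: (1, x)] = k x.
Proof. by apply: funext => y; rewrite /kcomb big_seq1 mul1r. Qed.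

Lemma ip_kcombl l f : H f -> ip (kcomb l) f = \sum_(p <- l) p.1 * f p.2.
Proof.
move=> Hf; elim: l => [|p l IHl].
  have H0 := rkhs_kcomb [::].
  have := ip_lincombl 1 H0 H0 Hf.
  have -> : lincomb (kcomb [::]) 1 (kcomb [::]) = kcomb [::].
    by apply: funext => y; rewrite /lincomb /kcomb big_nil mul1r addr0.
  by rewrite big_nil mul1r; lra.
rewrite kcomb_cons ip_lincombl ?IHl ?big_cons ?(ipC (rkhs_kernel _)) -?reproducing //.
- by rewrite addrC.
- exact: rkhs_kcomb.
- exact: rkhs_kernel.
Qed.

Section kcomb_approximation.
Variables (f : X -> R) (r : R) (l0 : seq (R * X)).
Hypotheses (Hf : H f) (r_ge0 : 0 <= r).

Let dist2 l := ip (lincomb f (-1) (kcomb l)) (lincomb f (-1) (kcomb l)).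

Hypothesis l0_near_inf : forall l, dist2 l0 <= dist2 l + r ^+ 2.

Let s0 := kcomb l0.
Let res := lincomb f (-1) s0.

Lemma ip_residual_kcomb_le l : ip res (kcomb l) ^+ 2 <= ip (kcomb l) (kcomb l) * r ^+ 2.
Proof.
have Hs0 := rkhs_kcomb l0; have Hs := rkhs_kcomb l.
have Hres : H res by exact: rkhs_lincomb.
apply: sqr_le_of_quadratic_ge0 => [|t]; first exact: ip_ge0.
have := l0_near_inf (l0 ++ map (fun p => (t * p.1, p.2)) l); rewrite /dist2.
have -> : lincomb f (-1) (kcomb (l0 ++ [seq (t * p.1, p.2) | p <- l])) =
    lincomb res (- t) (kcomb l).
  by rewrite -lincomb_kcomb; apply: funext => y; rewrite /res /s0 /lincomb /=; ring.
rewrite -/s0 -/res ip_lincomb_self //; lra.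
Qed.

Lemma sqr_residual_le x : (f x - s0 x) ^+ 2 <= r ^+ 2 * k x x.
Proof.
have Hres : H res by exact/rkhs_lincomb/rkhs_kcomb.
have Hk := rkhs_kernel x.
have := ip_residual_kcomb_le [:: (1, x)].
by rewrite kcomb1 -!reproducing // [k x x * _]mulrC /res /lincomb mulN1r.
Qed.

Lemma sqrt_ip_kcomb_le : Num.sqrt (ip s0 s0) <= Num.sqrt (ip f f) + 2 * r.
Proof.
have Hs0 := rkhs_kcomb l0; have Hres : H res by exact: rkhs_lincomb.
have res_s0 : `|ip res s0| <= r * Num.sqrt (ip s0 s0).
  rewrite mulrC; apply: ler_norm_of_sqr; first by rewrite mulr_ge0 ?sqrtr_ge0.
  by rewrite exprMn sqr_sqrtr ?ip_ge0 //; exact: ip_residual_kcomb_le.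
have : ip s0 s0 + 2 * ip res s0 <= ip f f.
  have -> : f = lincomb res 1 s0 by apply: funext => y; rewrite /res /lincomb; ring.
  rewrite ip_lincomb_self // expr1n mul1r mulr1; have := ip_ge0 Hres; lra.
move=> s0_le_f.
have tE : Num.sqrt (ip s0 s0) ^+ 2 = ip s0 s0 := sqr_sqrtr (ip_ge0 Hs0).
have FE : Num.sqrt (ip f f) ^+ 2 = ip f f := sqr_sqrtr (ip_ge0 Hf).
have [t_ge0 F_ge0] := (sqrtr_ge0 (ip s0 s0), sqrtr_ge0 (ip f f)).
have : `|Num.sqrt (ip s0 s0) - r| <= Num.sqrt (ip f f) + r.
  apply: ler_norm_of_sqr; first exact: addr_ge0.
  have := ler_norm (- ip res s0); have := mulr_ge0 r_ge0 F_ge0; rewrite normrN; nra.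
have := ler_norm (Num.sqrt (ip s0 s0) - r); lra.
Qed.

End kcomb_approximation.

Lemma kcomb_approx f r : H f -> 0 < r -> exists l,
  (forall x, (f x - kcomb l x) ^+ 2 <= r ^+ 2 * k x x) /\
  Num.sqrt (ip (kcomb l) (kcomb l)) <= Num.sqrt (ip f f) + 2 * r.
Proof.
move=> Hf r_gt0.
pose dist2 l := ip (lincomb f (-1) (kcomb l)) (lincomb f (-1) (kcomb l)).
have dist2_ge0 l : 0 <= dist2 l by exact/ip_ge0/rkhs_lincomb/rkhs_kcomb.
have has_inf_dist2 : has_inf (range dist2).
  by split; [exists (dist2 [::]), [::] | exists 0 => _ [l _ <-]].
have [_ [l0 _ <-] near_inf] := inf_adherent (exprn_gt0 2 r_gt0) has_inf_dist2.
exists l0; have r_ge0 := ltW r_gt0.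
have l0_near_inf l : dist2 l0 <= dist2 l + r ^+ 2.
  have inf_le : inf (range dist2) <= dist2 l.
    by apply: ge_inf; [case: has_inf_dist2 | exists l].
  by apply/ltW; apply: lt_le_trans near_inf _; rewrite lerD2r.
by split; [exact: sqr_residual_le | exact: sqrt_ip_kcomb_le].
Qed.

End rkhs.

Lemma cvg_norm_le (R : realType) (u : nat -> R) (l M : R) : u @ \oo --> l ->
  (\forall n \near \oo, `|u n| <= M) -> `|l| <= M.
Proof.
move=> u_l u_le; have norm_u : `|u n| @[n --> \oo] --> `|l| by exact: cvg_norm.
by rewrite -(cvg_lim _ norm_u) //; apply: limr_le => //; apply/cvg_ex; exists `|l|.
Qed.

Lemma eseries_tail (R : realType) (a : nat -> R) (L : R) (m : nat) :
  (fun n => \sum_(0 <= j < n) a j) @ \oo --> L ->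
  (\sum_(m <= j <oo) (a j)%:E)%E = (L - \sum_(0 <= j < m) a j)%:E.
Proof.
move=> sum_a; apply: (cvg_lim (@ereal_hausdorff _)).
have : (fun n => ((\sum_(0 <= j < n) a j) - \sum_(0 <= j < m) a j)%:E) @ \oo -->
    (L - \sum_(0 <= j < m) a j)%:E.
  by apply/fine_cvgP; split; [exact: nearW | exact: cvgB sum_a (cvg_cst _)].
apply: cvg_trans; apply: near_eq_cvg; near=> n.
have m_le_n : (m <= n)%N by near: n; exact: nbhs_infty_ge.
by rewrite sumEFin (big_cat_nat (leq0n m) m_le_n) /=; congr EFin; ring.
Unshelve. all: by end_near.
Qed.

Section probability_Rintegral.
Variables (R : realType) (dX : measure_display) (X : measurableType dX).
Variable mu : probability X R.

Local Notation Rintegrable f := (mu.-integrable setT (EFin \o f)).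
Local Notation Rint f := (Rintegral mu setT f).

Lemma Rintegrable_cst c : Rintegrable (fun _ => c).
Proof. exact: finite_measure_integrable_cst. Qed.

Lemma Rintegral_cst1 c : Rint (fun _ => c) = c.
Proof.
rewrite Rintegral_cst //; transitivity (c * fine (1%E : \bar R)); last by rewrite mulr1.
by congr (_ * fine _); rewrite -(probability_setT mu).
Qed.

Lemma EFin_Rintegral (f : X -> R) : Rintegrable f -> (Rint f)%:E = (\int[mu]_x (f x)%:E)%E.
Proof. by move=> If; rewrite fineK // integrable_fin_num. Qed.

Lemma RintegrableD (f g : X -> R) : Rintegrable f -> Rintegrable g -> Rintegrable (f \+ g).
Proof.
move=> If Ig; have -> : EFin \o (f \+ g) = ((EFin \o f) \+ (EFin \o g))%E.
  by apply: funext => x; rewrite /= EFinD.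
exact: integrableD.
Qed.

Lemma RintegrableZl (c : R) (f : X -> R) : Rintegrable f -> Rintegrable (fun x => c * f x).
Proof.
move=> If; have -> : EFin \o (fun x => c * f x) = (fun x => c%:E * (EFin \o f) x)%E.
  by apply: funext => x; rewrite /= EFinM.
exact: integrableZl.
Qed.

Lemma Rintegrable_sum (I : Type) (r : seq I) (F : I -> X -> R) :
  (forall i, Rintegrable (F i)) -> Rintegrable (fun x => \sum_(i <- r) F i x).
Proof.
move=> IF; elim: r => [|i r IHr].
  by under eq_fun do rewrite big_nil; exact: Rintegrable_cst.
by under eq_fun do rewrite big_cons; exact: RintegrableD.
Qed.

Lemma Rintegral_sum (I : Type) (r : seq I) (F : I -> X -> R) :
  (forall i, Rintegrable (F i)) ->
  Rint (fun x => \sum_(i <- r) F i x) = \sum_(i <- r) Rint (F i).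
Proof.
move=> IF; elim: r => [|i r IHr].
  by under eq_fun do rewrite big_nil; rewrite big_nil Rintegral_cst1.
under eq_fun do rewrite big_cons.
by rewrite big_cons RintegralD // ?IHr //; exact: Rintegrable_sum.
Qed.

Lemma bounded_Rintegrable (f : X -> R) (M : R) :
  measurable_fun setT f -> (forall x, `|f x| <= M) -> Rintegrable f.
Proof.
move=> mf f_le; apply: measurable_bounded_integrable => //.
  by apply: (@le_lt_trans _ _ 1%E); [rewrite -(probability_setT mu) | exact: ltry].
exists M; split; first by rewrite num_real.
by move=> r M_lt_r x _; apply: le_trans (f_le x) (ltW M_lt_r).
Qed.

Lemma cvg_Rintegral_bounded (h : nat -> X -> R) (f : X -> R) (M : R) :
  (forall n, measurable_fun setT (h n)) -> (forall n x, `|h n x| <= M) ->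
  (forall x, h ^~ x @ \oo --> f x) -> (fun n => Rint (h n)) @ \oo --> Rint f.
Proof.
move=> mh h_le h_f.
have mf : measurable_fun setT f by exact: measurable_fun_cvg mh (fun x _ => h_f x).
have f_le x : `|f x| <= M by apply: cvg_norm_le (h_f x) _; exact: nearW.
have If : Rintegrable f by exact: bounded_Rintegrable mf f_le.
have mhE n : measurable_fun setT (EFin \o h n) by exact/measurable_EFinP.
have hE_f x : setT x -> (EFin \o h n) x @[n --> \oo] --> (EFin \o f) x.
  by move=> _; apply/fine_cvgP; split; [exact: nearW | exact: h_f].
have hE_le n x : setT x -> (`|(EFin \o h n) x| <= (cst M%:E) x)%E.
  by move=> _; change (`|(h n x)%:E| <= M%:E)%E; rewrite abse_EFin lee_fin.
have M_fin (x : X) : setT x -> (cst M%:E) x \is a fin_num by [].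
have := dominated_cvg measurableT mhE hE_f M_fin (Rintegrable_cst M) hE_le.
by rewrite -[X in _ --> X]fineK ?integrable_fin_num // => /fine_cvg.
Qed.

Lemma sqr_Rintegral_le (g : X -> R) : Rintegrable g -> Rintegrable (fun x => g x ^+ 2) ->
  Rint g ^+ 2 <= Rint (fun x => g x ^+ 2).
Proof.
move=> Ig Ig2; set G := Rint g.
have : 0 <= Rint (fun x => (g x - G) ^+ 2) by apply: Rintegral_ge0 => x _; exact: sqr_ge0.
have -> : (fun x => (g x - G) ^+ 2) =
    (fun x => g x ^+ 2) \+ ((fun x => - (2 * G) * g x) \+ (fun _ => G ^+ 2)).
  by apply: funext => x /=; ring.
have IgG : Rintegrable (fun x => - (2 * G) * g x) by exact: RintegrableZl.
rewrite RintegralD //; last exact: RintegrableD IgG (Rintegrable_cst _).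
rewrite RintegralD //; last exact: Rintegrable_cst.
rewrite RintegralZl // Rintegral_cst1 -/G; lra.
Qed.

End probability_Rintegral.

Section mercer_quadrature.
Variables (R : realType) (dX : measure_display) (X : measurableType dX).
Variables (mu : probability X R) (k : X -> X -> R) (H : set (X -> R))
  (ip : (X -> R) -> (X -> R) -> R) (kappa : R) (sigma : nat -> R) (e : nat -> X -> R).
Hypotheses (rkhs : is_RKHS k H ip) (sqrt_kernel_diag_le : forall x, Num.sqrt (k x x) <= kappa)
  (e_measurable : forall j, measurable_fun setT (e j))
  (e_sqr_integrable : forall j, mu.-integrable setT (fun x => (e j x ^+ 2)%:E))
  (e_sqr_integral : forall j, (\int[mu]_x (e j x ^+ 2)%:E = 1)%E)
  (sigma_ge0 : forall j, 0 <= sigma j)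
  (mercer : forall x y, (fun n => \sum_(0 <= j < n) sigma j * e j x * e j y) @ \oo --> k x y).

Local Notation Rintegrable f := (mu.-integrable setT (EFin \o f)).
Local Notation Rint f := (Rintegral mu setT f).

Definition mercer_sum n x y := \sum_(0 <= j < n) sigma j * e j x * e j y.

Lemma mercer_sum_diagE n x : mercer_sum n x x = \sum_(0 <= j < n) sigma j * e j x ^+ 2.
Proof. by apply: eq_bigr => j _; rewrite -mulrA. Qed.

Lemma mercer_sum_diag_ge0 n x : 0 <= mercer_sum n x x.
Proof. by rewrite mercer_sum_diagE sumr_ge0 // => j _; rewrite mulr_ge0 ?sqr_ge0. Qed.

Lemma mercer_sum_diagB m n x : (m <= n)%N ->
  mercer_sum n x x - mercer_sum m x x = \sum_(m <= j < n) sigma j * e j x ^+ 2.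
Proof.
by move=> mn; rewrite !mercer_sum_diagE (big_cat_nat (leq0n m) mn) /= addrAC subrr add0r.
Qed.

Lemma mercer_sum_diag_le_kernel n x : mercer_sum n x x <= k x x.
Proof.
have nondecr : nondecreasing_seq (fun n => mercer_sum n x x).
  move=> m p mp; rewrite -subr_ge0 mercer_sum_diagB //.
  by rewrite sumr_ge0 // => j _; rewrite mulr_ge0 ?sqr_ge0.
have cvg_sum : cvgn (fun n => mercer_sum n x x).
  by apply/cvg_ex; exists (k x x); exact: (@mercer x x).
by have := nondecreasing_cvgn_le nondecr cvg_sum n; rewrite (cvg_lim _ (@mercer x x)).
Qed.

Lemma kernel_diag_le x : k x x <= kappa ^+ 2.
Proof.
have kappa_ge0 : 0 <= kappa := le_trans (sqrtr_ge0 _) (sqrt_kernel_diag_le x).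
rewrite -[k x x]sqr_sqrtr ?(kernel_diag_ge0 rkhs) // ler_sqr ?nnegrE ?sqrtr_ge0 //.
Qed.

Lemma mercer_sum_norm_le n x y : `|mercer_sum n x y| <= kappa ^+ 2.
Proof.
apply: le_trans (weighted_cauchy_schwarz _ _ _ sigma_ge0) _.
rewrite -!mercer_sum_diagE expr2.
have sqrt_sum_le z : Num.sqrt (mercer_sum n z z) <= kappa.
  apply: le_trans (sqrt_kernel_diag_le z).
  by rewrite ler_sqrt ?(kernel_diag_ge0 rkhs) ?mercer_sum_diag_le_kernel.
by rewrite ler_pM ?sqrtr_ge0.
Qed.

Lemma kernel_norm_le x y : `|k x y| <= kappa ^+ 2.
Proof.
by apply: cvg_norm_le (@mercer x y) _; apply: nearW => n; exact: mercer_sum_norm_le.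
Qed.

Lemma measurable_mercer_sum n x : measurable_fun setT (mercer_sum n x).
Proof. by apply: measurable_sum => j; apply: measurable_funM => //; exact: measurable_cst. Qed.

Lemma measurable_mercer_sum_diag n : measurable_fun setT (fun x => mercer_sum n x x).
Proof.
by apply: measurable_sum => j; apply: measurable_funM => //; apply: measurable_funM.
Qed.

Lemma measurable_kernel x : measurable_fun setT (k x).
Proof. exact: measurable_fun_cvg (measurable_mercer_sum ^~ x) (fun y _ => @mercer x y). Qed.

Lemma measurable_kernel_diag : measurable_fun setT (fun x => k x x).
Proof. exact: measurable_fun_cvg measurable_mercer_sum_diag (fun y _ => @mercer y y). Qed.

Lemma Rintegrable_kernel x : Rintegrable (k x).
Proof. exact: bounded_Rintegrable (measurable_kernel x) (kernel_norm_le x). Qed.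

Lemma Rintegrable_e j : Rintegrable (e j).
Proof.
have I1e2 : Rintegrable (fun x => 1 + e j x ^+ 2).
  exact: RintegrableD (Rintegrable_cst _ _) (e_sqr_integrable j).
apply: le_integrable I1e2 => //; first exact/measurable_EFinP.
move=> x _; change (`|(e j x)%:E| <= `|(1 + e j x ^+ 2)%:E|)%E.
rewrite !abse_EFin lee_fin [`|1 + _|]ger0_norm ?addr_ge0 ?sqr_ge0 //.
have := sqr_ge0 (`|e j x| - 1); have := real_normK (num_real (e j x)).
have := normr_ge0 (e j x); nra.
Qed.

Variables (N : nat) (xs : 'I_N -> X) (w : 'I_N -> R).

Definition quad_err (f : X -> R) := Rint f - \sum_(i < N) w i * f (xs i).

Lemma quad_err_lincomb f a g : Rintegrable f -> Rintegrable g ->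
  quad_err (lincomb f a g) = quad_err f + a * quad_err g.
Proof.
move=> If Ig; rewrite /quad_err /lincomb RintegralD // ?RintegralZl //; last first.
  exact: RintegrableZl.
have -> : \sum_(i < N) w i * (f (xs i) + a * g (xs i)) =
    \sum_(i < N) w i * f (xs i) + a * \sum_(i < N) w i * g (xs i).
  by rewrite mulr_sumr -big_split; apply: eq_bigr => i _ /=; ring.
ring.
Qed.

Lemma quad_errZ c f : Rintegrable f -> quad_err (fun x => c * f x) = c * quad_err f.
Proof.
move=> If; rewrite /quad_err RintegralZl // mulrBr mulr_sumr.
by congr (_ - _); apply: eq_bigr => i _; rewrite mulrCA.
Qed.

Lemma quad_err_sum (I : Type) (r : seq I) (c : I -> R) (F : I -> X -> R) :
  (forall i, Rintegrable (F i)) ->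
  quad_err (fun x => \sum_(i <- r) c i * F i x) = \sum_(i <- r) c i * quad_err (F i).
Proof.
move=> IF; elim: r => [|i r IHr].
  under eq_fun do rewrite big_nil.
  by rewrite big_nil /quad_err Rintegral_cst1 big1 ?subr0 // => j _; rewrite mulr0.
have -> : (fun x => \sum_(j <- i :: r) c j * F j x) =
    lincomb (fun x => \sum_(j <- r) c j * F j x) (c i) (F i).
  by apply: funext => x; rewrite /lincomb big_cons addrC.
rewrite quad_err_lincomb ?IHr ?big_cons 1?addrC //.
by apply: Rintegrable_sum => j; exact: RintegrableZl.
Qed.

Lemma quad_err_mercer_sum n z :
  quad_err (mercer_sum n z) = \sum_(0 <= j < n) sigma j * e j z * quad_err (e j).
Proof. by rewrite /mercer_sum quad_err_sum //; exact: Rintegrable_e. Qed.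

Lemma cvg_quad_err_kernel z :
  (fun n => \sum_(0 <= j < n) sigma j * e j z * quad_err (e j)) @ \oo --> quad_err (k z).
Proof.
under eq_fun do rewrite -quad_err_mercer_sum.
apply: cvgB.
  apply: (@cvg_Rintegral_bounded _ _ _ _ _ _ (kappa ^+ 2)) => [n|n x|y].
  - exact: measurable_mercer_sum.
  - exact: mercer_sum_norm_le.
  - exact: (@mercer z y).
apply: cvg_big => [|i _]; first exact: add_continuous.
by apply: cvgM; [exact: cvg_cst | exact: (@mercer z (xs i))].
Qed.

Variable d : nat.
Local Notation g := (gtail sigma e d).

Lemma gtailE y : g y = Num.sqrt (k y y - mercer_sum d y y).
Proof.
rewrite /gtail (@eseries_tail _ (fun j => sigma j * e j y ^+ 2) (k y y)) /=.
  by rewrite -mercer_sum_diagE.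
by under eq_fun do rewrite -mercer_sum_diagE; exact: (@mercer y y).
Qed.

Lemma gtail_sqr y : g y ^+ 2 = k y y - mercer_sum d y y.
Proof. by rewrite gtailE sqr_sqrtr // subr_ge0 mercer_sum_diag_le_kernel. Qed.

Lemma gtail_ge0 y : 0 <= g y.
Proof. exact: sqrtr_ge0. Qed.

Lemma gtail_le y : g y <= kappa.
Proof.
rewrite gtailE; apply: le_trans (sqrt_kernel_diag_le y).
by rewrite ler_sqrt ?(kernel_diag_ge0 rkhs) // gerBl mercer_sum_diag_ge0.
Qed.

Lemma measurable_gtail : measurable_fun setT g.
Proof.
have -> : g = Num.sqrt \o (fun y => k y y - mercer_sum d y y).
  by apply: funext => y; rewrite gtailE.
apply: measurableT_comp; first exact: continuous_measurable_fun (@sqrt_continuous R).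
exact: measurable_funB measurable_kernel_diag (measurable_mercer_sum_diag d).
Qed.

Lemma Rintegrable_gtail : Rintegrable g.
Proof.
have norm_g_le y : `|g y| <= kappa by rewrite ger0_norm ?gtail_le ?gtail_ge0.
exact: bounded_Rintegrable measurable_gtail norm_g_le.
Qed.

Lemma Rintegral_gtail_ge0 : 0 <= Rint g.
Proof. by apply: Rintegral_ge0 => y _; exact: gtail_ge0. Qed.

Lemma tail_comb_le (c : nat -> R) n y : (d <= n)%N ->
  `|\sum_(d <= j < n) sigma j * c j * e j y| <=
  Num.sqrt (\sum_(d <= j < n) sigma j * c j ^+ 2) * g y.
Proof.
move=> dn; apply: le_trans (weighted_cauchy_schwarz _ _ _ sigma_ge0) _.
rewrite ler_wpM2l ?sqrtr_ge0 // gtailE ler_sqrt ?subr_ge0 ?mercer_sum_diag_le_kernel //.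
by rewrite -mercer_sum_diagB // lerD2r mercer_sum_diag_le_kernel.
Qed.

Hypothesis w_ge0 : forall i, 0 <= w i.

Lemma sqrt_tail_quad_err_le n : (d <= n)%N ->
  Num.sqrt (\sum_(d <= j < n) sigma j * quad_err (e j) ^+ 2) <=
  Rint g + \sum_(i < N) w i * g (xs i).
Proof.
move=> dn; set Q := \sum_(d <= j < n) _; set T := _ + _.
have Q_ge0 : 0 <= Q by rewrite sumr_ge0 // => j _; rewrite mulr_ge0 ?sqr_ge0.
have T_ge0 : 0 <= T.
  by rewrite addr_ge0 ?Rintegral_gtail_ge0 // sumr_ge0 // => i _; rewrite mulr_ge0 ?gtail_ge0.
pose phi y := \sum_(d <= j < n) sigma j * quad_err (e j) * e j y.
have phi_le y : `|phi y| <= Num.sqrt Q * g y by exact: tail_comb_le.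
have Iphi : Rintegrable phi.
  by apply: Rintegrable_sum => j; apply: RintegrableZl; exact: Rintegrable_e.
have QE : Q = quad_err phi.
  rewrite quad_err_sum; last exact: Rintegrable_e.
  by apply: eq_bigr => j _; rewrite expr2 mulrA.
have : Q <= Num.sqrt Q * T.
  rewrite {1}QE /quad_err /T mulrDr mulr_sumr -sumrN; apply: lerD.
    rewrite -RintegralZl //; last exact: Rintegrable_gtail.
    apply: le_Rintegral => //; first exact: RintegrableZl Rintegrable_gtail.
    by move=> y _; apply: le_trans (ler_norm _) (phi_le y).
  apply: ler_sum => i _; rewrite mulrCA -mulrN; apply: ler_wpM2l => //.
  by apply: le_trans (phi_le (xs i)); rewrite -normrN ler_norm.
rewrite -{1}(sqr_sqrtr Q_ge0); have := sqrtr_ge0 Q; nra.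
Qed.

Definition kcoef (l : seq (R * X)) j := \sum_(p <- l) p.1 * e j p.2.

Lemma cvg_quad_err_kcomb l :
  (fun n => \sum_(0 <= j < n) sigma j * kcoef l j * quad_err (e j)) @ \oo -->
  quad_err (kcomb k l).
Proof.
rewrite quad_err_sum; last by move=> p; exact: Rintegrable_kernel.
have sumE n : \sum_(0 <= j < n) sigma j * kcoef l j * quad_err (e j) =
    \sum_(p <- l) p.1 * \sum_(0 <= j < n) sigma j * e j p.2 * quad_err (e j).
  under eq_bigr do rewrite /kcoef mulr_sumr mulr_suml.
  rewrite exchange_big /=; apply: eq_bigr => p _; rewrite mulr_sumr.
  by apply: eq_bigr => j _; ring.
under eq_fun do rewrite sumE.
apply: cvg_big => [|p _]; first exact: add_continuous.
by apply: cvgM; [exact: cvg_cst | exact: cvg_quad_err_kernel].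
Qed.

Lemma kcoef_sqr_sumE l n : \sum_(0 <= j < n) sigma j * kcoef l j ^+ 2 =
  \sum_(p <- l) p.1 * \sum_(q <- l) q.1 * mercer_sum n q.2 p.2.
Proof.
transitivity (\sum_(0 <= j < n) \sum_(p <- l) \sum_(q <- l)
    p.1 * (q.1 * (sigma j * e j q.2 * e j p.2))).
  apply: eq_bigr => j _; rewrite /kcoef expr2 big_distrlr /= mulr_sumr.
  apply: eq_bigr => p _; rewrite mulr_sumr; apply: eq_bigr => q _; ring.
rewrite exchange_big /=; apply: eq_bigr => p _; rewrite mulr_sumr.
rewrite exchange_big /=; apply: eq_bigr => q _; rewrite !mulr_sumr.
by apply: eq_bigr => j _.
Qed.

Lemma cvg_kcoef_sqr_sum l :
  (fun n => \sum_(0 <= j < n) sigma j * kcoef l j ^+ 2) @ \oo --> ip (kcomb k l) (kcomb k l).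
Proof.
rewrite (ip_kcombl rkhs _ (rkhs_kcomb rkhs l)) /kcomb.
under eq_fun do rewrite kcoef_sqr_sumE.
apply: cvg_big => [|p _]; first exact: add_continuous.
apply: cvgM; first exact: cvg_cst.
apply: cvg_big => [|q _]; first exact: add_continuous.
by apply: cvgM; [exact: cvg_cst | exact: (@mercer q.2 p.2)].
Qed.

Lemma kcoef_sqr_sum_le l n :
  \sum_(0 <= j < n) sigma j * kcoef l j ^+ 2 <= ip (kcomb k l) (kcomb k l).
Proof.
have nondecr : nondecreasing_seq (fun n => \sum_(0 <= j < n) sigma j * kcoef l j ^+ 2).
  move=> m p mp; rewrite (big_cat_nat (leq0n m) mp) /= lerDl.
  by rewrite sumr_ge0 // => j _; rewrite mulr_ge0 ?sqr_ge0.
have cvg_sum : cvgn (fun n => \sum_(0 <= j < n) sigma j * kcoef l j ^+ 2).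
  by apply/cvg_ex; eexists; exact: cvg_kcoef_sqr_sum.
have := nondecreasing_cvgn_le nondecr cvg_sum n.
by rewrite (cvg_lim _ (@cvg_kcoef_sqr_sum l)).
Qed.

Lemma quad_err_kcomb_le l C : 0 <= C ->
  \sum_(0 <= j < d) sigma j * quad_err (e j) ^+ 2 +
    (Rint g + \sum_(i < N) w i * g (xs i)) ^+ 2 <= C ^+ 2 ->
  `|quad_err (kcomb k l)| <= Num.sqrt (ip (kcomb k l) (kcomb k l)) * C.
Proof.
move=> C_ge0 C_bound; apply: (cvg_norm_le (@cvg_quad_err_kcomb l)); near=> n.
have dn : (d <= n)%N by near: n; exact: nbhs_infty_ge.
have sum_ge0 (r : seq nat) (c : nat -> R) : 0 <= \sum_(j <- r) sigma j * c j ^+ 2.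
  by rewrite sumr_ge0 // => j _; rewrite mulr_ge0 ?sqr_ge0.
rewrite (big_cat_nat (leq0n d) dn) /=.
apply: le_trans (ler_normD _ _) _.
apply: le_trans (lerD (weighted_cauchy_schwarz _ _ _ sigma_ge0)
  (weighted_cauchy_schwarz _ _ _ sigma_ge0)) _.
apply: le_trans (lerD (lexx _) (ler_wpM2l (sqrtr_ge0 _) (sqrt_tail_quad_err_le dn))) _.
apply: le_trans (dot2_le_sqrt_mul _ _ C_ge0 _) _; first by rewrite sqr_sqrtr.
rewrite ler_wpM2r // !sqr_sqrtr // -big_cat_nat //=.
by rewrite ler_sqrt ?kcoef_sqr_sum_le // (ip_ge0 rkhs (rkhs_kcomb rkhs l)).
Unshelve. all: by end_near.
Qed.

Hypothesis w_sum1 : \sum_(i < N) w i = 1.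

Lemma quad_err_norm_le (f : X -> R) (M : R) :
  measurable_fun setT f -> (forall x, `|f x| <= M) -> `|quad_err f| <= 2 * M.
Proof.
move=> mf f_le; have If := bounded_Rintegrable mu mf f_le.
have Rint_le : `|Rint f| <= M.
  have f_bounds x : - M <= f x <= M by rewrite -ler_norml.
  rewrite ler_norml; apply/andP; split.
    rewrite -[X in X <= _](Rintegral_cst1 mu); apply: le_Rintegral => // [|x _].
      exact: Rintegrable_cst.
    by case/andP: (f_bounds x).
  rewrite -[X in _ <= X](Rintegral_cst1 mu); apply: le_Rintegral => // [|x _].
    exact: Rintegrable_cst.
  by case/andP: (f_bounds x).
have sum_le : `|\sum_(i < N) w i * f (xs i)| <= M.
  apply: le_trans (ler_norm_sum _ _ _) _.
  rewrite -[M in _ <= M]mul1r -w_sum1 mulr_suml; apply: ler_sum => i _.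
  by rewrite normrM ger0_norm // ler_wpM2l.
by apply: le_trans (ler_normB _ _) _; rewrite mulr2n mulrDl mul1r lerD.
Qed.

Lemma measurable_kcomb l : measurable_fun setT (kcomb k l).
Proof.
apply: measurable_sum => p; apply: measurable_funM; first exact: measurable_cst.
exact: measurable_kernel.
Qed.

Lemma rkhs_measurable f : H f -> measurable_fun setT f.
Proof.
move=> Hf; have [L approx] := choice (fun n => kcomb_approx rkhs Hf (harmonic_gt0 n)).
apply: (measurable_fun_cvg (h := fun n => kcomb k (L n))) => [n|x _].
  exact: measurable_kcomb.
set c := Num.sqrt (k x x).
have to0 : (fun n => harmonic n * c) @ \oo --> 0.
  by rewrite -(mul0r c); exact: cvgM cvg_harmonic (cvg_cst _).
have lower : (fun n => f x - harmonic n * c) @ \oo --> f x.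
  by rewrite -[X in _ --> X]subr0; exact: cvgB (cvg_cst _) to0.
have upper : (fun n => f x + harmonic n * c) @ \oo --> f x.
  by rewrite -[X in _ --> X]addr0; exact: cvgD (cvg_cst _) to0.
apply: squeeze_cvgr lower upper; apply: nearW => n.
rewrite -ler_distl distrC; apply: ler_norm_of_sqr.
  by rewrite mulr_ge0 ?sqrtr_ge0 // ltW // harmonic_gt0.
by rewrite exprMn sqr_sqrtr ?(kernel_diag_ge0 rkhs) //; case: (approx n).
Qed.

Lemma unit_ball_norm_le f x : H f -> ip f f <= 1 -> `|f x| <= kappa.
Proof.
move=> Hf f_le1; apply: ler_norm_of_sqr.
  exact: le_trans (sqrtr_ge0 _) (sqrt_kernel_diag_le x).
apply: le_trans (sqr_eval_le rkhs x Hf) _; rewrite -[kappa ^+ 2]mul1r.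
by rewrite ler_pM ?(ip_ge0 rkhs) ?(kernel_diag_ge0 rkhs) ?kernel_diag_le.
Qed.

Lemma Rintegrable_kcomb l : Rintegrable (kcomb k l).
Proof. by apply: Rintegrable_sum => p; exact/RintegrableZl/Rintegrable_kernel. Qed.

Lemma quad_err_unit_ball_le f C : H f -> ip f f <= 1 -> 0 <= C ->
  (forall l, `|quad_err (kcomb k l)| <= Num.sqrt (ip (kcomb k l) (kcomb k l)) * C) ->
  `|quad_err f| <= C.
Proof.
move=> Hf f_le1 C_ge0 kcomb_le; have mf := rkhs_measurable Hf.
have If := bounded_Rintegrable mu mf (fun x => unit_ball_norm_le x Hf f_le1).
pose K := 2 * `|kappa| + 2 * C. (* kappa < 0 is possible when X is empty *)
have approx_le r : 0 < r -> `|quad_err f| <= C + r * K.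
  move=> r_gt0; have [l [res_le kcomb_norm_le]] := kcomb_approx rkhs Hf r_gt0.
  have res_norm_le x : `|lincomb f (-1) (kcomb k l) x| <= r * `|kappa|.
    rewrite /lincomb mulN1r; apply: le_trans (_ : _ <= r * Num.sqrt (k x x)) _.
      apply: ler_norm_of_sqr; first by rewrite mulr_ge0 ?sqrtr_ge0 ?ltW.
      by rewrite exprMn sqr_sqrtr ?(kernel_diag_ge0 rkhs).
    apply: ler_wpM2l; first exact: ltW.
    exact: le_trans (sqrt_kernel_diag_le x) (ler_norm _).
  have mres : measurable_fun setT (lincomb f (-1) (kcomb k l)).
    exact: measurable_funD mf (measurable_funM (measurable_cst _) (measurable_kcomb l)).
  have res_qe := quad_err_norm_le mres res_norm_le.
  have kcomb_qe : `|quad_err (kcomb k l)| <= (1 + 2 * r) * C.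
    apply: le_trans (kcomb_le l) (ler_wpM2r C_ge0 _); apply: le_trans kcomb_norm_le _.
    by rewrite lerD2r -sqrtr1 ler_wsqrtr.
  have -> : quad_err f = quad_err (lincomb f (-1) (kcomb k l)) + quad_err (kcomb k l).
    by rewrite quad_err_lincomb ?Rintegrable_kcomb //; ring.
  by apply: le_trans (ler_normD _ _) _; rewrite /K; lra.
apply/ler_addgt0Pr => z z_gt0.
have K_ge0 : 0 <= K by rewrite addr_ge0 ?mulr_ge0.
apply: le_trans (approx_le (z / (K + 1)) _) _; first by rewrite divr_gt0 // ltr_wpDl.
by rewrite lerD2l mulrAC ler_pdivrMr ?ltr_wpDl // ler_pM2l // lerDl.
Qed.

Lemma Rintegral_mercer_sum_diag n :
  Rint (fun x => mercer_sum n x x) = \sum_(0 <= j < n) sigma j.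
Proof.
under eq_fun do rewrite mercer_sum_diagE.
rewrite Rintegral_sum; last by move=> j; exact: RintegrableZl (e_sqr_integrable j).
apply: eq_bigr => j _; rewrite RintegralZl //; last exact: e_sqr_integrable.
by rewrite /Rintegral e_sqr_integral mulr1.
Qed.

Lemma cvg_sum_sigma : (fun n => \sum_(0 <= j < n) sigma j) @ \oo --> Rint (fun x => k x x).
Proof.
under eq_fun do rewrite -Rintegral_mercer_sum_diag.
apply: (@cvg_Rintegral_bounded _ _ _ _ _ _ (kappa ^+ 2)) => [n|n x|x].
- exact: measurable_mercer_sum_diag.
- rewrite ger0_norm ?mercer_sum_diag_ge0 //.
  exact: le_trans (mercer_sum_diag_le_kernel n x) (kernel_diag_le x).
- exact: (@mercer x x).
Qed.

Lemma Rintegral_gtail_sqr :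
  Rint (fun x => g x ^+ 2) = Rint (fun x => k x x) - \sum_(0 <= j < d) sigma j.
Proof.
under eq_fun do rewrite gtail_sqr.
have kdiag_norm_le x : `|k x x| <= kappa ^+ 2.
  by rewrite ger0_norm ?(kernel_diag_ge0 rkhs) ?kernel_diag_le.
have sum_norm_le x : `|mercer_sum d x x| <= kappa ^+ 2 by exact: mercer_sum_norm_le.
rewrite RintegralB ?Rintegral_mercer_sum_diag //.
- exact: bounded_Rintegrable measurable_kernel_diag kdiag_norm_le.
- exact: bounded_Rintegrable (measurable_mercer_sum_diag d) sum_norm_le.
Qed.

Lemma Rintegral_gtail_le : Rint g <= Num.sqrt (fine (\sum_(d <= j <oo) (sigma j)%:E)%E).
Proof.
rewrite (eseries_tail _ cvg_sum_sigma) /= -Rintegral_gtail_sqr.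
rewrite -[X in X <= _]ger0_norm ?Rintegral_gtail_ge0 // -sqrtr_sqr ler_wsqrtr //.
apply: sqr_Rintegral_le; first exact: Rintegrable_gtail.
have sqr_g_le x : `|g x ^+ 2| <= kappa ^+ 2.
  rewrite ger0_norm ?sqr_ge0 // gtail_sqr.
  by apply: le_trans (kernel_diag_le x); rewrite gerBl mercer_sum_diag_ge0.
exact: bounded_Rintegrable (measurable_funX 2 measurable_gtail) sqr_g_le.
Qed.

Lemma sum_sqr_Psi_err :
  \sum_(j < d.+1) quad_err (fun x => Psi sigma e d x j) ^+ 2 =
  \sum_(0 <= j < d) sigma j * quad_err (e j) ^+ 2 + quad_err g ^+ 2.
Proof.
rewrite big_ord_recr /= big_mkord; congr (_ + _).
  apply: eq_bigr => j _.
  have -> : (fun x => Psi sigma e d x (widen_ord (leqnSn d) j)) =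
      (fun x => Num.sqrt (sigma j) * e j x).
    by apply: funext => x; rewrite /Psi /= ltn_ord.
  by rewrite quad_errZ ?Rintegrable_e // exprMn sqr_sqrtr.
by congr (quad_err _ ^+ 2); apply: funext => x; rewrite /Psi /= ltnn.
Qed.

Lemma quad_err_unit_ball_le_tail f eps : H f -> ip f f <= 1 -> 0 <= eps ->
  \sum_(0 <= j < d) sigma j * quad_err (e j) ^+ 2 + quad_err g ^+ 2 <= eps ^+ 2 ->
  `|quad_err f| <= 2 * Rint g + eps.
Proof.
move=> Hf f_le1 eps_ge0 err_le; have G_ge0 := Rintegral_gtail_ge0.
have a_ge0 : 0 <= \sum_(0 <= j < d) sigma j * quad_err (e j) ^+ 2.
  by rewrite sumr_ge0 // => j _; rewrite mulr_ge0 ?sqr_ge0.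
have err_g_le : `|quad_err g| <= eps by apply: ler_norm_of_sqr => //; lra.
have C_bound : \sum_(0 <= j < d) sigma j * quad_err (e j) ^+ 2 +
    (Rint g + \sum_(i < N) w i * g (xs i)) ^+ 2 <= (2 * Rint g + eps) ^+ 2.
  have -> : Rint g + \sum_(i < N) w i * g (xs i) = 2 * Rint g - quad_err g.
    by rewrite /quad_err; ring.
  have := ler_norm (- quad_err g); rewrite normrN => err_g_ge.
  have eps_err_g_ge0 : 0 <= eps + quad_err g by lra.
  have := mulr_ge0 G_ge0 eps_err_g_ge0; lra.
have C_ge0 : 0 <= 2 * Rint g + eps by rewrite addr_ge0 ?mulr_ge0.
by apply: quad_err_unit_ball_le => // l; exact: quad_err_kcomb_le C_bound.
Qed.

Lemma wce_le_tail eps : 0 <= eps ->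
  \sum_(0 <= j < d) sigma j * quad_err (e j) ^+ 2 + quad_err g ^+ 2 <= eps ^+ 2 ->
  (wce mu H ip w xs <= (2 * Rint g + eps)%:E)%E.
Proof.
move=> eps_ge0 err_le; apply: ge_ereal_sup => _ [f [Hf f_le1] <-].
have If := bounded_Rintegrable mu (rkhs_measurable Hf) (fun x => unit_ball_norm_le x Hf f_le1).
by rewrite -EFin_Rintegral // -EFinB abse_EFin lee_fin quad_err_unit_ball_le_tail.
Qed.
End mercer_quadrature.

Theorem proposition5 (R : realType) (dX : measure_display) (X : measurableType dX)
  (mu : probability X R) (k : X -> X -> R)
  (H : set (X -> R)) (ip : (X -> R) -> (X -> R) -> R) (kappa : R)
  (sigma : nat -> R) (e : nat -> X -> R) (d : nat)
  (N : nat) (xs : 'I_N -> X) (w : 'I_N -> R) (eps : R) :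
  pd_kernel k ->
  is_RKHS k H ip ->
  0 < kappa ->
  (forall x, Num.sqrt (k x x) <= kappa) ->
  (forall j, measurable_fun setT (e j)) ->
  (forall j, mu.-integrable setT (fun x => (e j x ^+ 2)%:E)) ->
  (forall i j, (\int[mu]_x (e i x * e j x)%:E = ((i == j)%:R)%:E)%E) ->
  (forall j, 0 <= sigma j) ->
  (forall j, sigma j.+1 <= sigma j) ->
  (forall x y, (fun n => \sum_(0 <= j < n) sigma j * e j x * e j y) @ \oo --> k x y) ->
  (1 <= d)%N ->
  (forall i, 0 <= w i) ->
  \sum_(i < N) w i = 1 ->
  0 <= eps ->
  eucl_norm d.+1 (fun j : 'I_d.+1 =>
      Rintegral mu setT (fun x => Psi sigma e d x j)
      - \sum_(i < N) w i * Psi sigma e d (xs i) j) <= eps ->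
  (wce mu H ip w xs <= (2 * Rintegral mu setT (gtail sigma e d) + eps)%:E)%E /\
  2 * Rintegral mu setT (gtail sigma e d) + eps
    <= 2 * Num.sqrt (fine (\sum_(d <= j <oo) (sigma j)%:E)%E) + eps.
Proof.
move=> _ rkhs _ sqrt_kdiag_le e_meas e_sqr_int e_orth sigma_ge0 _ mercer _ w_ge0 w_sum1
  eps_ge0 Psi_err_le.
have e_sqr_integral j : (\int[mu]_x (e j x ^+ 2)%:E = 1)%E.
  by have := e_orth j j; rewrite eqxx mulr1n => <-; apply: eq_integral => x _; rewrite expr2.
have err_le : \sum_(0 <= j < d) sigma j * quad_err mu xs w (e j) ^+ 2 +
    quad_err mu xs w (gtail sigma e d) ^+ 2 <= eps ^+ 2.
  rewrite -sum_sqr_Psi_err // -[X in X <= _]sqr_sqrtr ?ler_sqr ?nnegrE ?sqrtr_ge0 //.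
  by rewrite sumr_ge0 // => j _; exact: sqr_ge0.
split.
  exact (wce_le_tail rkhs sqrt_kdiag_le e_meas e_sqr_int sigma_ge0 mercer
    w_ge0 w_sum1 eps_ge0 err_le).
rewrite lerD2r ler_pM2l //.
exact (Rintegral_gtail_le rkhs sqrt_kdiag_le e_meas e_sqr_int e_sqr_integral sigma_ge0
  mercer d).
Qed.
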